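(* Under the standing assumptions for the $M=1$ system (see context) with $\nu_0=0$ and $\nu_1=\nu$, assume also $x_0(s)\ne0$ for $s>0$ and $s^{-\nu}y_1(s)/x_0(s)\to1$ as $s\to0^+$. Then $$s x_0'=-\eta_0x_0+s^{-\nu}y_0,\quad s y_0'=-(2\xi_0+s)s^{\nu}x_0+\eta_0y_0,\quad \eta_0'=s^{\nu}x_0^2,\quad \xi_0'=x_0y_0,$$ and moreover $$s^{\nu+1}x_0^2=2\xi_0+\eta_0-\eta_0(\eta_0-\nu),\qquad -s^{-\nu}y_0^2-(2\xi_0+s)s^{\nu}x_0^2+(2\eta_0-\nu)x_0y_0+\eta_0=0.$$
   Context: Fix complex parameters $\nu_0,\nu_1$ and put $e_1=\nu_0+\nu_1$, $e_2=\nu_0\nu_1$. Let $x_0,x_1,y_0,y_1,\xi_0,\xi_1,\eta_0,\eta_1$ be smooth complex-valued functions of $s\in(0,\infty)$ satisfying, with $'=d/ds$, the system $s x_0'=-\eta_0x_0-x_1$, $s x_1'=-\eta_1x_0+sx_0+\xi_0x_0+\xi_1x_1$, $s y_1'=-\xi_1y_1+y_0$, $s y_0'=-\xi_0y_1-sy_1+\eta_0y_0+\eta_1y_1$, $\xi_0'=x_0y_0$, $\xi_1'=x_0y_1$, $\eta_0'=x_0y_1$, $\eta_1'=x_1y_1$, together with the boundary behaviour as $s\to0^+$: $\xi_0\to e_2$, $\xi_1\to-e_1$, $\eta_0\to0$, $\eta_1\to0$, and $x_j(s)y_k(s)\to0$ for all $j,k\in\{0,1\}$. *)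

From Stdlib Require Import Reals.
Open Scope R_scope.

Definition CC : Type := (R * R)%type.
Definition Re (z : CC) : R := fst z.
Definition Im (z : CC) : R := snd z.
Definition RtoC (r : R) : CC := (r, 0).
Definition Czero : CC := (0, 0).
Definition Cone : CC := (1, 0).
Definition Cadd (z w : CC) : CC := (Re z + Re w, Im z + Im w).
Definition Copp (z : CC) : CC := (- Re z, - Im z).
Definition Csub (z w : CC) : CC := Cadd z (Copp w).
Definition Cmul (z w : CC) : CC :=
  (Re z * Re w - Im z * Im w, Re z * Im w + Im z * Re w).
Definition Cinv (z : CC) : CC :=
  (Re z / (Re z ^ 2 + Im z ^ 2), - Im z / (Re z ^ 2 + Im z ^ 2)).
Definition Cdiv (z w : CC) : CC := Cmul z (Cinv w).
Definition Cnorm (z : CC) : R := sqrt (Re z ^ 2 + Im z ^ 2).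

(* principal power s^nu = exp(nu * ln s) for real s > 0 and complex nu *)
Definition Cpow (s : R) (nu : CC) : CC :=
  (exp (Re nu * ln s) * cos (Im nu * ln s),
   exp (Re nu * ln s) * sin (Im nu * ln s)).

Definition Cderiv (f : R -> CC) (s : R) (d : CC) : Prop :=
  derivable_pt_lim (fun t => Re (f t)) s (Re d) /\
  derivable_pt_lim (fun t => Im (f t)) s (Im d).

Definition sDeriv_eq (f : R -> CC) (s : R) (rhs : CC) : Prop :=
  exists d : CC, Cderiv f s d /\ Cmul (RtoC s) d = rhs.

Definition Deriv_eq (f : R -> CC) (s : R) (rhs : CC) : Prop :=
  exists d : CC, Cderiv f s d /\ d = rhs.

Definition smooth_pos_R (f : R -> R) : Prop :=
  exists D : nat -> R -> R,
    (forall s, 0 < s -> D O s = f s) /\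
    (forall n s, 0 < s -> derivable_pt_lim (D n) s (D (S n) s)).

Definition smooth_pos (f : R -> CC) : Prop :=
  smooth_pos_R (fun t => Re (f t)) /\ smooth_pos_R (fun t => Im (f t)).

Definition lim0plus (f : R -> CC) (L : CC) : Prop :=
  forall eps : R, 0 < eps -> exists delta : R, 0 < delta /\
    forall s : R, 0 < s < delta -> Cnorm (Csub (f s) L) < eps.

Declare Scope C_scope.
Delimit Scope C_scope with C.
Infix "+" := Cadd : C_scope.
Infix "-" := Csub : C_scope.
Infix "*" := Cmul : C_scope.
Infix "/" := Cdiv : C_scope.
Notation "- z" := (Copp z) : C_scope.

(* The boundary data at [0+] pin down four conserved quantities.  The
   combinations [xi1 - eta0] and [x1 y1 + x0 y0] have vanishing derivative, so
   they equal their limits [-nu] and [0]; then [eta1 + xi0] and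
   [u = s^(-nu) y1 / x0] have vanishing derivative too, whence [eta1 = -xi0]
   and, since [u -> 1], [y1 = s^nu x0] and [x1 = -s^(-nu) y0].  Substituting
   these reduces the system to the stated one, and the two identities are
   first integrals of the reduced system whose defects tend to [0] at [0+]. *)
From Stdlib Require Import Reals Lra Field.
Open Scope R_scope.

Lemma CC_eq (a b c d : R) : a = c -> b = d -> (a, b) = (c, d).
Proof. intros; subst; reflexivity. Qed.

Lemma sum_sq_neq0 (a b : R) : (a, b) <> Czero -> a * a + b * b <> 0.
Proof.
  intros Hab E; apply Hab.
  assert (a = 0) by nra; assert (b = 0) by nra; subst; reflexivity.
Qed.

Lemma CRth : ring_theory Czero Cone Cadd Cmul Csub Copp (@eq CC).
Proof.
  constructor; intros; repeat match goal with z : CC |- _ => destruct z end;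
    unfold Csub, Cadd, Cmul, Copp, Czero, Cone, Re, Im; simpl; apply CC_eq; ring.
Qed.

Lemma Cinv_l (z : CC) : z <> Czero -> Cmul (Cinv z) z = Cone.
Proof.
  destruct z as [a b]; intros Hz%sum_sq_neq0.
  unfold Cinv, Cmul, Cone, Re, Im; simpl; apply CC_eq; field; lra.
Qed.

Lemma CFth : field_theory Czero Cone Cadd Cmul Csub Copp Cdiv Cinv (@eq CC).
Proof.
  constructor.
  - exact CRth.
  - intro E; inversion E; lra.
  - reflexivity.
  - exact Cinv_l.
Qed.

Add Field CField : CFth.

Lemma RtoC_neq0 (s : R) : s <> 0 -> RtoC s <> Czero.
Proof. intros Hs E; inversion E; auto. Qed.

Lemma RtoC2 : RtoC 2 = Cadd Cone Cone.
Proof. unfold RtoC, Cadd, Cone, Re, Im; simpl; apply CC_eq; ring. Qed.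

Lemma Cpow_add (s : R) (a b : CC) : Cpow s (Cadd a b) = Cmul (Cpow s a) (Cpow s b).
Proof.
  destruct a as [ar ai], b as [br bi]; unfold Cpow, Cadd, Cmul, Re, Im; simpl.
  rewrite Rmult_plus_distr_r, exp_plus, (Rmult_plus_distr_r ai).
  apply CC_eq; [rewrite cos_plus | rewrite sin_plus]; ring.
Qed.

Lemma Cpow_zero (s : R) : Cpow s Czero = Cone.
Proof.
  unfold Cpow, Czero, Cone, Re, Im; simpl.
  rewrite !Rmult_0_l, exp_0, cos_0, sin_0; apply CC_eq; ring.
Qed.

Lemma Cpow_one (s : R) : 0 < s -> Cpow s Cone = RtoC s.
Proof.
  intros Hs; unfold Cpow, Cone, RtoC, Re, Im; simpl.
  rewrite !Rmult_0_l, Rmult_1_l, exp_ln, cos_0, sin_0 by exact Hs; apply CC_eq; ring.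
Qed.

Lemma Cpow_mul_opp (s : R) (a : CC) : Cmul (Cpow s a) (Cpow s (Copp a)) = Cone.
Proof.
  rewrite <- Cpow_add, <- (Cpow_zero s); f_equal.
  destruct a; unfold Cadd, Copp, Czero, Re, Im; simpl; apply CC_eq; ring.
Qed.

Lemma Cpow_neq0 (s : R) (a : CC) : Cpow s a <> Czero.
Proof.
  intro E; generalize (Cpow_mul_opp s a); rewrite E.
  unfold Cmul, Czero, Cone, Re, Im; simpl; intro H; inversion H; lra.
Qed.

Lemma Cpow_opp (s : R) (a : CC) : Cpow s (Copp a) = Cinv (Cpow s a).
Proof.
  generalize (Cpow_mul_opp s a) (Cpow_neq0 s a); intros H Hn.
  transitivity (Cmul (Cinv (Cpow s a)) (Cmul (Cpow s a) (Cpow s (Copp a)))).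
  - field; exact Hn.
  - rewrite H; ring.
Qed.

Lemma derivable_pt_lim_ext (f g : R -> R) (s l l' : R) :
  (forall t, g t = f t) -> l = l' -> derivable_pt_lim f s l -> derivable_pt_lim g s l'.
Proof.
  intros H E D eps Heps; destruct (D eps Heps) as [d Hd]; exists d.
  intros h Hh Hd'; rewrite !H, <- E; apply Hd; auto.
Qed.

Lemma Cderiv_eqv (f : R -> CC) (s : R) (d d' : CC) : Cderiv f s d -> d = d' -> Cderiv f s d'.
Proof. intros; subst; auto. Qed.

Lemma Cderiv_const (c : CC) (s : R) : Cderiv (fun _ => c) s Czero.
Proof. split; apply derivable_pt_lim_const. Qed.

Lemma Cderiv_id (s : R) : Cderiv RtoC s Cone.
Proof. split; [apply derivable_pt_lim_id | apply derivable_pt_lim_const]. Qed.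

Lemma Cderiv_add (f g : R -> CC) (s : R) (df dg : CC) :
  Cderiv f s df -> Cderiv g s dg -> Cderiv (fun t => Cadd (f t) (g t)) s (Cadd df dg).
Proof.
  intros [H1 H2] [H3 H4]; split.
  - exact (derivable_pt_lim_plus _ _ _ _ _ H1 H3).
  - exact (derivable_pt_lim_plus _ _ _ _ _ H2 H4).
Qed.

Lemma Cderiv_opp (f : R -> CC) (s : R) (df : CC) :
  Cderiv f s df -> Cderiv (fun t => Copp (f t)) s (Copp df).
Proof.
  intros [H1 H2]; split.
  - exact (derivable_pt_lim_opp _ _ _ H1).
  - exact (derivable_pt_lim_opp _ _ _ H2).
Qed.

Lemma Cderiv_sub (f g : R -> CC) (s : R) (df dg : CC) :
  Cderiv f s df -> Cderiv g s dg -> Cderiv (fun t => Csub (f t) (g t)) s (Csub df dg).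
Proof. intros; apply Cderiv_add; [| apply Cderiv_opp]; assumption. Qed.

Lemma Cderiv_mul (f g : R -> CC) (s : R) (df dg : CC) :
  Cderiv f s df -> Cderiv g s dg ->
  Cderiv (fun t => Cmul (f t) (g t)) s (Cadd (Cmul df (g s)) (Cmul (f s) dg)).
Proof.
  intros [H1 H2] [H3 H4]; split.
  - eapply derivable_pt_lim_ext; [| | exact (derivable_pt_lim_minus _ _ _ _ _
      (derivable_pt_lim_mult _ _ _ _ _ H1 H3) (derivable_pt_lim_mult _ _ _ _ _ H2 H4))].
    + reflexivity.
    + unfold Cadd, Cmul, Re, Im; simpl; ring.
  - eapply derivable_pt_lim_ext; [| | exact (derivable_pt_lim_plus _ _ _ _ _
      (derivable_pt_lim_mult _ _ _ _ _ H1 H4) (derivable_pt_lim_mult _ _ _ _ _ H2 H3))].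
    + reflexivity.
    + unfold Cadd, Cmul, Re, Im; simpl; ring.
Qed.

Lemma Cderiv_inv (f : R -> CC) (s : R) (df : CC) : f s <> Czero -> Cderiv f s df ->
  Cderiv (fun t => Cinv (f t)) s (Copp (Cmul df (Cmul (Cinv (f s)) (Cinv (f s))))).
Proof.
  intros Hn [H1 H2].
  assert (Hsq := derivable_pt_lim_plus _ _ _ _ _
    (derivable_pt_lim_mult _ _ _ _ _ H1 H1) (derivable_pt_lim_mult _ _ _ _ _ H2 H2)).
  assert (Hsq_ext : forall t,
    Re (f t) ^ 2 + Im (f t) ^ 2 = ((fun t => Re (f t)) * (fun t => Re (f t))
                                 + (fun t => Im (f t)) * (fun t => Im (f t)))%F t)
    by (intros; unfold plus_fct, mult_fct; ring).
  assert (Hn' : ((fun t => Re (f t)) * (fun t => Re (f t))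
                 + (fun t => Im (f t)) * (fun t => Im (f t)))%F s <> 0).
  { unfold plus_fct, mult_fct; destruct (f s); exact (sum_sq_neq0 _ _ Hn). }
  destruct (f s) as [a b] eqn:Ef; apply sum_sq_neq0 in Hn.
  cbv beta in Hsq; rewrite Ef in Hsq; simpl in Hsq.
  split.
  - eapply derivable_pt_lim_ext; [| | exact (derivable_pt_lim_div _ _ _ _ _ H1 Hsq Hn')].
    + intros; unfold Cinv, div_fct; rewrite Hsq_ext; reflexivity.
    + unfold plus_fct, mult_fct, Rsqr; rewrite Ef.
      unfold Cinv, Copp, Cmul, Re, Im; simpl; field; exact Hn.
  - eapply derivable_pt_lim_ext;
      [| | exact (derivable_pt_lim_div _ _ _ _ _ (derivable_pt_lim_opp _ _ _ H2) Hsq Hn')].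
    + intros; unfold Cinv, div_fct, opp_fct; rewrite Hsq_ext; reflexivity.
    + unfold plus_fct, mult_fct, opp_fct, Rsqr; rewrite Ef.
      unfold Cinv, Copp, Cmul, Re, Im; simpl; field; exact Hn.
Qed.

Lemma Cderiv_pow (a : CC) (s : R) : 0 < s ->
  Cderiv (fun t => Cpow t a) s (Cmul (Cmul a (Cpow s a)) (Cinv (RtoC s))).
Proof.
  intros Hs; destruct a as [ar ai].
  assert (Hln : forall c, derivable_pt_lim (fun t => c * ln t) s (c * / s))
    by (intro c; exact (derivable_pt_lim_scal ln c s _ (derivable_pt_lim_ln s Hs))).
  assert (HE := derivable_pt_lim_comp _ exp s _ _ (Hln ar) (derivable_pt_lim_exp _)).
  assert (HC := derivable_pt_lim_comp _ cos s _ _ (Hln ai) (derivable_pt_lim_cos _)).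
  assert (HS := derivable_pt_lim_comp _ sin s _ _ (Hln ai) (derivable_pt_lim_sin _)).
  split; eapply derivable_pt_lim_ext;
    [| | exact (derivable_pt_lim_mult _ _ _ _ _ HE HC)
     | | | exact (derivable_pt_lim_mult _ _ _ _ _ HE HS)];
    try reflexivity; unfold Cpow, Cmul, Cinv, RtoC, Re, Im, comp; simpl; field; lra.
Qed.

Definition Rlim0plus (g : R -> R) (l : R) : Prop := limit1_in g (fun t => 0 < t) l 0.

Lemma Rabs_le_norm (x y : R) : Rabs x <= sqrt (x ^ 2 + y ^ 2).
Proof. rewrite <- sqrt_Rsqr_abs; apply sqrt_le_1_alt; unfold Rsqr; nra. Qed.

Lemma norm_le_Rabs_add (x y : R) : sqrt (x ^ 2 + y ^ 2) <= Rabs x + Rabs y.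
Proof.
  pose proof (Rabs_pos x); pose proof (Rabs_pos y).
  rewrite <- (sqrt_Rsqr (Rabs x + Rabs y)) by lra.
  apply sqrt_le_1_alt.
  replace (x ^ 2) with (Rabs x * Rabs x) by (rewrite <- Rabs_mult, Rabs_right; nra).
  replace (y ^ 2) with (Rabs y * Rabs y) by (rewrite <- Rabs_mult, Rabs_right; nra).
  unfold Rsqr; nra.
Qed.

Lemma lim0plus_split (f : R -> CC) (L : CC) :
  lim0plus f L <-> Rlim0plus (fun t => Re (f t)) (Re L) /\ Rlim0plus (fun t => Im (f t)) (Im L).
Proof.
  unfold lim0plus, Rlim0plus, limit1_in, limit_in; simpl; unfold Rdist, Cnorm.
  unfold Csub, Cadd, Copp, Re, Im; simpl.
  split.
  - intros H; split; intros eps Heps; destruct (H eps Heps) as [d [Hd Hd']];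
      exists d; split; auto; intros t [Ht Htd];
      rewrite Rminus_0_r, Rabs_right in Htd by lra; specialize (Hd' t (conj Ht Htd)).
    + eapply Rle_lt_trans; [apply Rabs_le_norm | exact Hd'].
    + eapply Rle_lt_trans; [| exact Hd']; rewrite Rplus_comm; apply Rabs_le_norm.
  - intros [H1 H2] eps Heps.
    destruct (H1 (eps / 2) ltac:(lra)) as [d1 [Hd1 Hd1']].
    destruct (H2 (eps / 2) ltac:(lra)) as [d2 [Hd2 Hd2']].
    exists (Rmin d1 d2); split; [apply Rmin_pos; assumption |].
    intros t Ht; pose proof (Rmin_l d1 d2); pose proof (Rmin_r d1 d2).
    specialize (Hd1' t); specialize (Hd2' t).
    rewrite Rminus_0_r, Rabs_right in Hd1', Hd2' by lra.
    specialize (Hd1' ltac:(lra)); specialize (Hd2' ltac:(lra)).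
    eapply Rle_lt_trans; [apply norm_le_Rabs_add | unfold Rminus in *; lra].
Qed.

Lemma lim0plus_ext (f g : R -> CC) (L : CC) :
  (forall t, 0 < t -> f t = g t) -> lim0plus f L -> lim0plus g L.
Proof.
  intros E H eps Heps; destruct (H eps Heps) as [d [Hd Hd']]; exists d; split; auto.
  intros t Ht; rewrite <- E by lra; auto.
Qed.

Lemma lim0plus_eqv (f : R -> CC) (L L' : CC) : lim0plus f L -> L = L' -> lim0plus f L'.
Proof. intros; subst; auto. Qed.

Lemma Rlim0plus_const (c : R) : Rlim0plus (fun _ => c) c.
Proof.
  intros eps Heps; exists 1; split; [lra |]; intros; simpl; unfold Rdist.
  rewrite Rminus_diag, Rabs_R0; lra.
Qed.

Lemma lim0plus_const (c : CC) : lim0plus (fun _ => c) c.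
Proof. apply lim0plus_split; split; apply Rlim0plus_const. Qed.

Lemma lim0plus_id : lim0plus RtoC Czero.
Proof.
  apply lim0plus_split; split; simpl; [| apply Rlim0plus_const].
  intros eps Heps; exists eps; split; auto; intros t [_ Ht]; exact Ht.
Qed.

Lemma lim0plus_add (f g : R -> CC) (a b : CC) : lim0plus f a -> lim0plus g b ->
  lim0plus (fun t => Cadd (f t) (g t)) (Cadd a b).
Proof.
  rewrite !lim0plus_split; intros [H1 H2] [H3 H4]; split.
  - exact (limit_plus _ _ _ _ _ _ H1 H3).
  - exact (limit_plus _ _ _ _ _ _ H2 H4).
Qed.

Lemma lim0plus_opp (f : R -> CC) (a : CC) :
  lim0plus f a -> lim0plus (fun t => Copp (f t)) (Copp a).
Proof.
  rewrite !lim0plus_split; intros [H1 H2]; split.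
  - exact (limit_Ropp _ _ _ _ H1).
  - exact (limit_Ropp _ _ _ _ H2).
Qed.

Lemma lim0plus_sub (f g : R -> CC) (a b : CC) : lim0plus f a -> lim0plus g b ->
  lim0plus (fun t => Csub (f t) (g t)) (Csub a b).
Proof. intros; apply lim0plus_add; [| apply lim0plus_opp]; assumption. Qed.

Lemma lim0plus_mul (f g : R -> CC) (a b : CC) : lim0plus f a -> lim0plus g b ->
  lim0plus (fun t => Cmul (f t) (g t)) (Cmul a b).
Proof.
  rewrite !lim0plus_split; intros [H1 H2] [H3 H4]; split.
  - exact (limit_minus _ _ _ _ _ _ (limit_mul _ _ _ _ _ _ H1 H3) (limit_mul _ _ _ _ _ _ H2 H4)).
  - exact (limit_plus _ _ _ _ _ _ (limit_mul _ _ _ _ _ _ H1 H4) (limit_mul _ _ _ _ _ _ H2 H3)).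
Qed.

(* By the mean value theorem [g] is constant on [(0, s]]; a value different
   from [l] would then contradict the limit at [0+]. *)
Lemma Rderiv0_lim0plus_const (g : R -> R) (l : R) :
  (forall s, 0 < s -> derivable_pt_lim g s 0) -> Rlim0plus g l ->
  forall s, 0 < s -> g s = l.
Proof.
  intros D L s Hs.
  assert (Hconst : forall t, 0 < t < s -> g t = g s).
  { intros t Ht; destruct (MVT_cor2 g (fun _ => 0) t s ltac:(lra)) as [c [Hc _]].
    - intros c Hc; apply D; lra.
    - lra. }
  destruct (Req_dec (g s) l) as [| Hne]; [assumption | exfalso].
  assert (Hp : 0 < Rabs (g s - l)) by (apply Rabs_pos_lt; lra).
  destruct (L _ Hp) as [d [Hd Hd']].
  set (t := Rmin s d / 2).
  assert (0 < Rmin s d) by (apply Rmin_pos; lra).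
  pose proof (Rmin_l s d); pose proof (Rmin_r s d).
  specialize (Hd' t); simpl in Hd'; unfold Rdist in Hd'.
  rewrite Rminus_0_r, Rabs_right, Hconst in Hd' by (unfold t; lra).
  enough (Rabs (g s - l) < Rabs (g s - l)) by lra.
  apply Hd'; unfold t; lra.
Qed.

Lemma Cderiv0_lim0plus_const (f : R -> CC) (L : CC) :
  (forall s, 0 < s -> Cderiv f s Czero) -> lim0plus f L ->
  forall s, 0 < s -> f s = L.
Proof.
  intros D [H1 H2]%lim0plus_split s Hs.
  rewrite (surjective_pairing (f s)), (surjective_pairing L); f_equal.
  - apply (Rderiv0_lim0plus_const (fun t => Re (f t))); auto; intros; apply D; auto.
  - apply (Rderiv0_lim0plus_const (fun t => Im (f t))); auto; intros; apply D; auto.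
Qed.

Lemma Cderiv_of_sDeriv_eq (f : R -> CC) (s : R) (rhs : CC) :
  0 < s -> sDeriv_eq f s rhs -> Cderiv f s (Cmul (Cinv (RtoC s)) rhs).
Proof.
  intros Hs [d [Hd E]]; apply (Cderiv_eqv _ _ d); [exact Hd |].
  rewrite <- E; field; apply RtoC_neq0; lra.
Qed.

Lemma Cderiv_of_Deriv_eq (f : R -> CC) (s : R) (rhs : CC) :
  Deriv_eq f s rhs -> Cderiv f s rhs.
Proof. intros [d [Hd E]]; subst; exact Hd. Qed.

Section ReducedSystem.

Variable nu : CC.
Variables x0 x1 y0 y1 xi0 xi1 eta0 eta1 : R -> CC.

Hypothesis Hx0 : forall s, 0 < s ->
  sDeriv_eq x0 s (- (eta0 s * x0 s) - x1 s)%C.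
Hypothesis Hx1 : forall s, 0 < s ->
  sDeriv_eq x1 s (- (eta1 s * x0 s) + RtoC s * x0 s + xi0 s * x0 s + xi1 s * x1 s)%C.
Hypothesis Hy1 : forall s, 0 < s ->
  sDeriv_eq y1 s (- (xi1 s * y1 s) + y0 s)%C.
Hypothesis Hy0 : forall s, 0 < s ->
  sDeriv_eq y0 s (- (xi0 s * y1 s) - RtoC s * y1 s + eta0 s * y0 s + eta1 s * y1 s)%C.
Hypothesis Hxi0 : forall s, 0 < s -> Deriv_eq xi0 s (x0 s * y0 s)%C.
Hypothesis Hxi1 : forall s, 0 < s -> Deriv_eq xi1 s (x0 s * y1 s)%C.
Hypothesis Heta0 : forall s, 0 < s -> Deriv_eq eta0 s (x0 s * y1 s)%C.
Hypothesis Heta1 : forall s, 0 < s -> Deriv_eq eta1 s (x1 s * y1 s)%C.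

Hypothesis Bxi0 : lim0plus xi0 Czero.
Hypothesis Bxi1 : lim0plus xi1 (Copp nu).
Hypothesis Beta0 : lim0plus eta0 Czero.
Hypothesis Beta1 : lim0plus eta1 Czero.
Hypothesis Bx0y0 : lim0plus (fun s => x0 s * y0 s)%C Czero.
Hypothesis Bx0y1 : lim0plus (fun s => x0 s * y1 s)%C Czero.
Hypothesis Bx1y0 : lim0plus (fun s => x1 s * y0 s)%C Czero.
Hypothesis Bx1y1 : lim0plus (fun s => x1 s * y1 s)%C Czero.

Hypothesis Hnz : forall s, 0 < s -> x0 s <> Czero.
Hypothesis Hratio : lim0plus (fun s => Cpow s (Copp nu) * y1 s / x0 s)%C Cone.

Local Ltac Cderiv_rules := repeat first
  [ apply Cderiv_add | apply Cderiv_sub | apply Cderiv_mul | apply Cderiv_opp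
  | apply Cderiv_const | apply Cderiv_id | apply Cderiv_pow; assumption
  | apply Cderiv_of_sDeriv_eq; [assumption | solve [auto]]
  | apply Cderiv_of_Deriv_eq; solve [auto] ].

Local Ltac lim0plus_rules := repeat first
  [ eassumption | apply lim0plus_add | apply lim0plus_sub | apply lim0plus_mul
  | apply lim0plus_opp | apply lim0plus_id | apply lim0plus_const ].

Lemma xi1_eq s : 0 < s -> xi1 s = (eta0 s - nu)%C.
Proof.
  intros Hs.
  transitivity (eta0 s + (xi1 s - eta0 s))%C; [ring |].
  enough (E : (xi1 s - eta0 s)%C = Copp nu) by (rewrite E; ring).
  revert s Hs; apply Cderiv0_lim0plus_const.
  - intros s Hs; eapply Cderiv_eqv; [Cderiv_rules | ring].
  - eapply lim0plus_eqv; [lim0plus_rules | ring].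
Qed.

Lemma x1y1_add_x0y0_eq0 s : 0 < s -> (x1 s * y1 s + x0 s * y0 s)%C = Czero.
Proof.
  revert s; apply Cderiv0_lim0plus_const.
  - intros s Hs; eapply Cderiv_eqv; [Cderiv_rules | ring].
  - eapply lim0plus_eqv; [lim0plus_rules | ring].
Qed.

Lemma eta1_eq s : 0 < s -> eta1 s = Copp (xi0 s).
Proof.
  intros Hs.
  transitivity ((eta1 s + xi0 s) - xi0 s)%C; [ring |].
  enough (E : (eta1 s + xi0 s)%C = Czero) by (rewrite E; ring).
  revert s Hs; apply Cderiv0_lim0plus_const.
  - intros s Hs; eapply Cderiv_eqv; [Cderiv_rules | exact (x1y1_add_x0y0_eq0 s Hs)].
  - eapply lim0plus_eqv; [lim0plus_rules | ring].
Qed.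

(* With [xi1 = eta0 - nu], [s u' = s^(-nu) x0^(-2) (x1 y1 + x0 y0) = 0]
   for [u = s^(-nu) y1 / x0]. *)
Lemma y1_eq s : 0 < s -> y1 s = (Cpow s nu * x0 s)%C.
Proof.
  intros Hs.
  assert (Hu : (Cpow s (Copp nu) * y1 s / x0 s)%C = Cone).
  { revert s Hs; apply Cderiv0_lim0plus_const; [| exact Hratio].
    intros s Hs; eapply Cderiv_eqv.
    - apply Cderiv_mul; [Cderiv_rules | apply Cderiv_inv; [auto | Cderiv_rules]].
    - pose proof (Hnz s Hs); pose proof (RtoC_neq0 s ltac:(lra)).
      rewrite xi1_eq by exact Hs.
      transitivity (Cinv (RtoC s) * Cpow s (Copp nu) * Cinv (x0 s * x0 s)
                    * (x1 s * y1 s + x0 s * y0 s))%C.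
      + field; auto.
      + rewrite x1y1_add_x0y0_eq0 by exact Hs; ring. }
  pose proof (Hnz s Hs); pose proof (Cpow_neq0 s nu).
  rewrite Cpow_opp in Hu.
  transitivity (Cpow s nu * x0 s * (Cinv (Cpow s nu) * y1 s / x0 s))%C.
  - field; auto.
  - rewrite Hu; ring.
Qed.

Lemma x1_eq s : 0 < s -> x1 s = (- (Cpow s (Copp nu) * y0 s))%C.
Proof.
  intros Hs; pose proof (Hnz s Hs); pose proof (Cpow_neq0 s nu).
  generalize (x1y1_add_x0y0_eq0 s Hs); rewrite y1_eq, Cpow_opp by exact Hs; intro V.
  transitivity (Cinv (Cpow s nu) * Cinv (x0 s) * (x1 s * (Cpow s nu * x0 s) + x0 s * y0 s)
                - Cinv (Cpow s nu) * y0 s)%C.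
  - field; auto.
  - rewrite V; ring.
Qed.

Lemma reduced_system s : 0 < s ->
  sDeriv_eq x0 s (- (eta0 s * x0 s) + Cpow s (Copp nu) * y0 s)%C /\
  sDeriv_eq y0 s (- ((RtoC 2 * xi0 s + RtoC s) * Cpow s nu * x0 s) + eta0 s * y0 s)%C /\
  Deriv_eq eta0 s (Cpow s nu * (x0 s * x0 s))%C /\
  Deriv_eq xi0 s (x0 s * y0 s)%C.
Proof.
  intros Hs; split; [| split; [| split]].
  - destruct (Hx0 s Hs) as [d [Hd E]]; exists d; split; [exact Hd |].
    rewrite E, x1_eq by exact Hs; ring.
  - destruct (Hy0 s Hs) as [d [Hd E]]; exists d; split; [exact Hd |].
    rewrite E, eta1_eq, y1_eq, RtoC2 by exact Hs; ring.
  - destruct (Heta0 s Hs) as [d [Hd E]]; exists d; split; [exact Hd |].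
    rewrite E, y1_eq by exact Hs; ring.
  - exact (Hxi0 s Hs).
Qed.

(* At [0+] the left-hand side equals [s x0 y1] by [y1_eq], hence tends to [0]. *)
Lemma x0_sq_first_integral s : 0 < s ->
  (Cpow s (nu + Cone) * (x0 s * x0 s))%C =
  (RtoC 2 * xi0 s + eta0 s - eta0 s * (eta0 s - nu))%C.
Proof.
  intros Hs.
  set (rhs := fun t => (RtoC 2 * xi0 t + eta0 t - eta0 t * (eta0 t - nu))%C).
  transitivity ((Cpow s (nu + Cone) * (x0 s * x0 s) - rhs s) + rhs s)%C; [ring |].
  enough (E : (Cpow s (nu + Cone) * (x0 s * x0 s) - rhs s)%C = Czero)
    by (rewrite E; unfold rhs; ring).
  revert s Hs; apply Cderiv0_lim0plus_const; unfold rhs.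
  - intros s Hs; eapply Cderiv_eqv; [Cderiv_rules |].
    pose proof (Hnz s Hs); pose proof (Cpow_neq0 s nu); pose proof (RtoC_neq0 s ltac:(lra)).
    rewrite !Cpow_add, !Cpow_one, x1_eq, y1_eq, Cpow_opp, RtoC2 by exact Hs.
    field; auto.
  - apply (lim0plus_ext (fun t => RtoC t * (x0 t * y1 t) - rhs t)%C); unfold rhs.
    + intros t Ht; rewrite Cpow_add, Cpow_one, y1_eq by exact Ht; ring.
    + eapply lim0plus_eqv; [lim0plus_rules | ring].
Qed.

(* At [0+] the left-hand side equals
   [- x1 y0 - (2 xi0 + s) x0 y1 + (2 eta0 - nu) x0 y0 + eta0], which tends to [0]. *)
Lemma y0_sq_first_integral s : 0 < s ->
  (- (Cpow s (Copp nu) * (y0 s * y0 s))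
   - (RtoC 2 * xi0 s + RtoC s) * Cpow s nu * (x0 s * x0 s)
   + (RtoC 2 * eta0 s - nu) * (x0 s * y0 s) + eta0 s)%C = Czero.
Proof.
  revert s; apply Cderiv0_lim0plus_const.
  - intros s Hs; eapply Cderiv_eqv; [Cderiv_rules |].
    pose proof (Hnz s Hs); pose proof (Cpow_neq0 s nu); pose proof (RtoC_neq0 s ltac:(lra)).
    rewrite !Cpow_opp, x1_eq, y1_eq, eta1_eq, Cpow_opp, RtoC2 by exact Hs.
    field; auto.
  - apply (lim0plus_ext (fun t => (x1 t * y0 t) - (RtoC 2 * xi0 t + RtoC t) * (x0 t * y1 t)
                                  + (RtoC 2 * eta0 t - nu) * (x0 t * y0 t) + eta0 t)%C).
    + intros t Ht; rewrite x1_eq, y1_eq by exact Ht; ring.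
    + eapply lim0plus_eqv; [lim0plus_rules | ring].
Qed.

End ReducedSystem.

Theorem mainTheorem4
  (nu : CC)
  (x0 x1 y0 y1 xi0 xi1 eta0 eta1 : R -> CC)
  (Hsm : smooth_pos x0 /\ smooth_pos x1 /\ smooth_pos y0 /\ smooth_pos y1 /\
         smooth_pos xi0 /\ smooth_pos xi1 /\ smooth_pos eta0 /\ smooth_pos eta1)
  (Hx0 : forall s, 0 < s ->
     sDeriv_eq x0 s (- (eta0 s * x0 s) - x1 s)%C)
  (Hx1 : forall s, 0 < s ->
     sDeriv_eq x1 s (- (eta1 s * x0 s) + RtoC s * x0 s + xi0 s * x0 s
                     + xi1 s * x1 s)%C)
  (Hy1 : forall s, 0 < s ->
     sDeriv_eq y1 s (- (xi1 s * y1 s) + y0 s)%C)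
  (Hy0 : forall s, 0 < s ->
     sDeriv_eq y0 s (- (xi0 s * y1 s) - RtoC s * y1 s + eta0 s * y0 s
                     + eta1 s * y1 s)%C)
  (Hxi0 : forall s, 0 < s -> Deriv_eq xi0 s (x0 s * y0 s)%C)
  (Hxi1 : forall s, 0 < s -> Deriv_eq xi1 s (x0 s * y1 s)%C)
  (Heta0 : forall s, 0 < s -> Deriv_eq eta0 s (x0 s * y1 s)%C)
  (Heta1 : forall s, 0 < s -> Deriv_eq eta1 s (x1 s * y1 s)%C)
  (* boundary behaviour with nu0 = 0, nu1 = nu: e1 = nu, e2 = 0 *)
  (Bxi0 : lim0plus xi0 Czero)
  (Bxi1 : lim0plus xi1 (Copp nu))
  (Beta0 : lim0plus eta0 Czero)
  (Beta1 : lim0plus eta1 Czero)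
  (Bx0y0 : lim0plus (fun s => x0 s * y0 s)%C Czero)
  (Bx0y1 : lim0plus (fun s => x0 s * y1 s)%C Czero)
  (Bx1y0 : lim0plus (fun s => x1 s * y0 s)%C Czero)
  (Bx1y1 : lim0plus (fun s => x1 s * y1 s)%C Czero)
  (Hnz : forall s, 0 < s -> x0 s <> Czero)
  (Hratio : lim0plus (fun s => Cpow s (Copp nu) * y1 s / x0 s)%C Cone) :
  (forall s, 0 < s ->
     sDeriv_eq x0 s (- (eta0 s * x0 s) + Cpow s (Copp nu) * y0 s)%C /\
     sDeriv_eq y0 s (- ((RtoC 2 * xi0 s + RtoC s) * Cpow s nu * x0 s)
                     + eta0 s * y0 s)%C /\
     Deriv_eq eta0 s (Cpow s nu * (x0 s * x0 s))%C /\
     Deriv_eq xi0 s (x0 s * y0 s)%C) /\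
  (forall s, 0 < s ->
     (Cpow s (nu + Cone) * (x0 s * x0 s))%C =
       (RtoC 2 * xi0 s + eta0 s - eta0 s * (eta0 s - nu))%C /\
     (- (Cpow s (Copp nu) * (y0 s * y0 s))
      - (RtoC 2 * xi0 s + RtoC s) * Cpow s nu * (x0 s * x0 s)
      + (RtoC 2 * eta0 s - nu) * (x0 s * y0 s) + eta0 s)%C = Czero).
Proof.
  split; intros s Hs; [| split].
  - apply (reduced_system nu x0 x1 y0 y1 xi0 xi1 eta0 eta1); assumption.
  - apply (x0_sq_first_integral nu x0 x1 y0 y1 xi0 xi1 eta0 eta1); assumption.
  - apply (y0_sq_first_integral nu x0 x1 y0 y1 xi0 xi1 eta0 eta1); assumption.
Qed.
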